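(* For each $\mathfrak{t}\in\{\widetilde{\mathrm{I}},\mathrm{II},\mathrm{III},\widetilde{\mathrm{IV}}\}$, the stuffle product $*_{\mathfrak{t}}$ on $\mathfrak{A}^1_{\mathfrak{t}}$ is commutative and associative.
   Context: All algebras are over $\mathbb{Q}$; words are concatenation products of letters, $\mathbf{1}$ is the empty word. For a free algebra on a set of letters equipped with a commutative bilinear product $[\cdot,\cdot]$ on the span of the letters, the associated stuffle product $*$ is the bilinear product with $\mathbf{1}*u=u*\mathbf{1}=u$ and $(\alpha u)*(\beta v)=\alpha(u*\beta v)+\beta(\alpha u*v)+[\alpha,\beta](u*v)$ for letters $\alpha,\beta$ and words $u,v$. Type $\widetilde{\mathrm{I}}$: $\mathfrak{A}^1_{\widetilde{\mathrm{I}}}$ is the free algebra on letters $\theta$ and $z_k$ ($k\ge1$), with $[z_k,z_l]=z_{k+l}+z_{k+l-1}$, $[\theta,z_k]=[z_k,\theta]=z_{k+1}$, $[\theta,\theta]=z_2-\theta$; $*_{\widetilde{\mathrm{I}}}$ is the associated stuffle. Type II: $\mathfrak{A}^1_{\mathrm{II}}$ is the free algebra on letters $z'_k$ ($k\ge0$), with $[z'_k,z'_l]=z'_{k+l}$; $*_{\mathrm{II}}$ is the associated stuffle. Type III: let $B$ be the free algebra on letters $z_k$ ($k\in\mathbb{Z}$) with stuffle $*_B$ given by $[z_k,z_l]=z_{k+l}$. Let $\mathfrak{A}^1_{\mathrm{III}}$ be the $\mathbb{Q}$-span of the symbols $z'_kw$ ($k\in\mathbb{Z}$, $w$ a word in $B$).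 Set $\sigma_-(z'_nw):=z_nw-z_{n-1}w\in B$, and define bilinearly $z'_ku*_{\mathrm{III}}z'_lv:=z'_k\big(u*_B\sigma_-(z'_lv)\big)+z'_l\big(\sigma_-(z'_ku)*_Bv\big)+(z'_{k+l}-z'_{k+l-1})(u*_Bv)$. Type $\widetilde{\mathrm{IV}}$: let $C$ be the free algebra on letters $z'_k$ ($k\ge0$) with stuffle $*_C$ given by $[z'_k,z'_l]=z'_{k+l}$. Let $\mathfrak{A}^1_{\widetilde{\mathrm{IV}}}:=\mathbb{Q}\mathbf{1}\oplus\theta C\oplus\bigoplus_{k\ge1}z_kC$ (with new first-position symbols $\theta,z_k$). Put $\sigma_+(z_nw):=z'_nw+z'_{n-1}w\in C$. Define $*_{\widetilde{\mathrm{IV}}}$ bilinearly with unit $\mathbf{1}$ and, for $k,l\ge1$ and words $u,v\in C$: $z_ku*z_lv=z_k\big(u*_C\sigma_+(z_lv)\big)+z_l\big(\sigma_+(z_ku)*_Cv\big)+(z_{k+l}+z_{k+l-1})(u*_Cv)$; $z_ku*\theta v=\theta v*z_ku=z_k\big(u*_Cz'_1v\big)+\theta\big(\sigma_+(z_ku)*_Cv\big)+z_{k+1}(u*_Cv)$; $\theta u*\theta v=\theta\big(u*_Cz'_1v\big)+\theta\big(z'_1u*_Cv\big)+(z_2-\theta)(u*_Cv)$. *)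

From HB Require Import structures.
From mathcomp Require Import all_boot all_order all_algebra.
From mathcomp Require Import finmap.
From mathcomp.multinomials Require Import monalg.
Set Implicit Arguments. Unset Strict Implicit. Unset Printing Implicit Defensive.
Import GRing.Theory.
Local Open Scope ring_scope.

Definition QA (K : choiceType) := {malg rat[K]}.

Definition lin (K K' : choiceType) (f : K -> QA K') (p : QA K) : QA K' :=
  \sum_(x <- msupp p) p@_x *: f x.

Definition bilin (K K' : choiceType) (f : K -> K -> QA K') (p q : QA K) : QA K' :=
  lin (fun x => lin (f x) q) p.

Definition pre (L : choiceType) (a : L) (p : QA (seq L)) : QA (seq L) :=
  lin (fun w => << a :: w >>) p.

(* Generic stuffle on words over the letters L; the commutative bracket
   [a,b] of two letters is given as a list of (coefficient, letter) pairs,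
   i.e. [a,b] = \sum_(c <- br a b) c.1 * c.2. *)
Fixpoint stw (L : choiceType) (br : L -> L -> seq (rat * L)%type) (u : seq L)
  : seq L -> QA (seq L) :=
  match u with
  | [::] => fun v => << v >>
  | a :: u' =>
      fix stu (v : seq L) : QA (seq L) :=
        match v with
        | [::] => << a :: u' >>
        | b :: v' => pre a (stw br u' v) + pre b (stu v')
                     + \sum_(c <- br a b) c.1 *: pre c.2 (stw br u' v')
        end
  end.

Definition stuffle (L : choiceType) (br : L -> L -> seq (rat * L)%type) :=
  bilin (stw br).

(* Letters theta and z_k (k >= 1).  zS n denotes the letter z_(n+1).   *)
Inductive letI := thetaI | zS of nat.

Definition letI_enc (a : letI) : option nat :=
  match a with thetaI => None | zS n => Some n end.
Definition letI_dec (o : option nat) : letI :=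
  match o with None => thetaI | Some n => zS n end.
Lemma letI_encK : cancel letI_enc letI_dec. Proof. by case. Qed.
HB.instance Definition _ := Countable.copy letI (can_type letI_encK).

(* [z_k,z_l] = z_(k+l) + z_(k+l-1), [theta,z_k] = z_(k+1),
   [theta,theta] = z_2 - theta *)
Definition brI (a b : letI) : seq (rat * letI)%type :=
  match a, b with
  | zS k, zS l => [:: (1, zS (k + l).+1); (1, zS (k + l))]
  | thetaI, zS k | zS k, thetaI => [:: (1, zS k.+1)]
  | thetaI, thetaI => [:: (1, zS 1); (-1, thetaI)]
  end.
Definition AI := QA (seq letI).
Definition stuffleI : AI -> AI -> AI := stuffle brI.

Definition brN (k l : nat) : seq (rat * nat)%type := [:: (1, k + l)].
Definition AII := QA (seq nat).
Definition stuffleII : AII -> AII -> AII := stuffle brN.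

Definition brB (k l : int) : seq (rat * int)%type := [:: (1, k + l)].
Definition AB := QA (seq int).
Definition stuffleB : AB -> AB -> AB := stuffle brB.
(* basis element (k, w) of A_III stands for the symbol z'_k w *)
Definition AIII := QA (int * seq int)%type.
Definition preIII (k : int) (p : AB) : AIII := lin (fun w => << (k, w) >>) p.
Definition sigma_minus (x : (int * seq int)%type) : AB :=
  << x.1 :: x.2 >> - << (x.1 - 1) :: x.2 >>.
Definition stIII_basis (x y : (int * seq int)%type) : AIII :=
  let: (k, u) := x in let: (l, v) := y in
  preIII k (stuffleB << u >> (sigma_minus y))
  + preIII l (stuffleB (sigma_minus x) << v >>)
  + (preIII (k + l) (stuffleB << u >> << v >>)
     - preIII (k + l - 1) (stuffleB << u >> << v >>)).
Definition stuffleIII : AIII -> AIII -> AIII := bilin stIII_basis.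

Definition AC := QA (seq nat).
Definition stuffleC : AC -> AC -> AC := stuffle brN.
(* basis of A_IV~ : None stands for 1, Some (a, w) for the symbol a w with
   a in {theta, z_k (k>=1)} and w a word in C *)
Definition AIV := QA (option (letI * seq nat)%type).
Definition preIV (a : letI) (p : AC) : AIV := lin (fun w => << Some (a, w) >>) p.
(* sigma_+(z_(n+1) w) = z'_(n+1) w + z'_n w *)
Definition sigma_plus (n : nat) (w : seq nat) : AC := << n.+1 :: w >> + << n :: w >>.
Definition stIV_basis (x y : option (letI * seq nat)%type) : AIV :=
  match x, y with
  | None, _ => << y >>
  | _, None => << x >>
  | Some (zS k, u), Some (zS l, v) =>
      preIV (zS k) (stuffleC << u >> (sigma_plus l v))
      + preIV (zS l) (stuffleC (sigma_plus k u) << v >>)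
      + (preIV (zS (k + l).+1) (stuffleC << u >> << v >>)
         + preIV (zS (k + l)) (stuffleC << u >> << v >>))
  | Some (zS k, u), Some (thetaI, v) | Some (thetaI, v), Some (zS k, u) =>
      preIV (zS k) (stuffleC << u >> << 1%N :: v >>)
      + preIV thetaI (stuffleC (sigma_plus k u) << v >>)
      + preIV (zS k.+1) (stuffleC << u >> << v >>)
  | Some (thetaI, u), Some (thetaI, v) =>
      preIV thetaI (stuffleC << u >> << 1%N :: v >>)
      + preIV thetaI (stuffleC << 1%N :: u >> << v >>)
      + (preIV (zS 1) (stuffleC << u >> << v >>)
         - preIV thetaI (stuffleC << u >> << v >>))
  end.
Definition stuffleIV : AIV -> AIV -> AIV := bilin stIV_basis.

(* The four products are stuffles in disguise.  Types I~ and II are stuffles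
   on free algebras, and a stuffle is commutative (resp. associative) as soon as
   the bracket of letters is; both are proved by induction on words once the
   defining recursion is extended to linear combinations of letters:
     (P X) * (Q Y) = P (X * Q Y) + Q (P X * Y) + [P, Q] (X * Y).
   Type III embeds into B by the injective linear map sigma_-, which is
   multiplicative because sigma_-(z'_k) = z_k - z_(k-1) transforms the bracket
   z'_(k+l) - z'_(k+l-1) of z'_k and z'_l into [sigma_-(z'_k), sigma_-(z'_l)].
   Likewise type IV~ embeds into C by extending sigma_+ with 1 |-> 1 and
   theta w |-> z'_1 w, a map that also respects the brackets of letters. *)

From HB Require Import structures.
From mathcomp Require Import all_boot all_order all_algebra sesquilinear.
From mathcomp Require Import finmap ssrAC zify.
From mathcomp.multinomials Require Import monalg.
Set Implicit Arguments. Unset Strict Implicit. Unset Printing Implicit Defensive.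
Import GRing.Theory.
Local Open Scope ring_scope.

Local Notation bilinear F := (bilinear_for *:%R *:%R F).

Section LinearExtension.
Variables K K' : choiceType.

Lemma monalgEZ (p : QA K) : p = \sum_(x <- msupp p) p@_x *: << x >>.
Proof.
rewrite {1}(monalgE p); apply: eq_bigr => x _.
by apply/malgP => k; rewrite mcoeffZ !mcoeffU mulr_natr.
Qed.

Lemma lin_is_linear (f : K -> QA K') : linear (lin f).
Proof.
move=> c p q.
set d := (msupp p `|` msupp q `|` msupp (c *: p + q))%fset.
have linE r : (msupp r `<=` d)%fset -> lin f r = \sum_(x <- d) r@_x *: f x.
  move=> sub; rewrite /lin; apply: big_fset_incl => // x _ xn.
  by rewrite mcoeff_outdom // scale0r.
rewrite !linE /d ?fsubsetUr ?fsubsetU ?fsubsetUl ?fsubset_refl ?orbT //.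
rewrite scaler_sumr -big_split /=; apply: eq_bigr => x _.
by rewrite mcoeffD mcoeffZ scalerDl scalerA.
Qed.
HB.instance Definition _ (f : K -> QA K') :=
  GRing.isLinear.Build rat (QA K) (QA K') *:%R (lin f) (lin_is_linear f).

Lemma linU (f : K -> QA K') x : lin f << x >> = f x.
Proof. by rewrite /lin msuppU oner_eq0 big_seq_fset1 mcoeffUU scale1r. Qed.

Lemma eq_lin (f g : K -> QA K') p : f =1 g -> lin f p = lin g p.
Proof. by move=> efg; apply: eq_bigr => x _; rewrite efg. Qed.

Lemma lin_funP (c : rat) (f g : K -> QA K') p :
  lin (fun x => c *: f x + g x) p = c *: lin f p + lin g p.
Proof.
rewrite /lin scaler_sumr -big_split /=.
by apply: eq_bigr => x _; rewrite scalerDr !scalerA mulrC.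
Qed.

Lemma linear_malg_ext (F G : QA K -> QA K') :
  linear F -> linear G -> (forall x, F << x >> = G << x >>) -> F =1 G.
Proof.
move=> linF linG eFG p.
pose F' : {linear QA K -> QA K'} := HB.pack F (GRing.isLinear.Build _ _ _ _ F linF).
pose G' : {linear QA K -> QA K'} := HB.pack G (GRing.isLinear.Build _ _ _ _ G linG).
rewrite (monalgEZ p) -[F _]/(F' _) -[G _]/(G' _) !linear_sum.
by apply: eq_bigr => x _; rewrite !linearZ /= eFG.
Qed.

Lemma mcoeff_lin (f : K -> QA K') (p : QA K) y :
  (lin f p)@_y = \sum_(x <- msupp p) p@_x * (f x)@_y.
Proof. by rewrite /lin raddf_sum; apply: eq_bigr => x _; exact: mcoeffZ. Qed.

Lemma sum_mcoeff_delta (p : QA K) y :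
  \sum_(x <- msupp p) p@_x * (x == y)%:R = p@_y.
Proof.
rewrite {3}(monalgE p) raddf_sum; apply: eq_bigr => x _.
by rewrite mulr_natr; symmetry; exact: mcoeffU.
Qed.

Lemma mcoeff_chain_eq0 (p : QA K) (g : nat -> K) (h : K -> nat) :
  cancel g h -> (forall n, p@_(g n.+1) = 0 -> p@_(g n) = 0) ->
  forall n, p@_(g n) = 0.
Proof.
move=> gK down n.
have outside m : (\max_(x <- msupp p) h x < m)%N -> p@_(g m) = 0.
  move=> lt_max; apply: mcoeff_outdom; apply: contraTN lt_max => supp_gm.
  by rewrite -leqNgt -{1}(gK m) (leq_bigmax_seq _ supp_gm).
suff down_from i : p@_(g (n + i)%N) = 0 -> p@_(g n) = 0.
  by apply: (down_from (\max_(x <- msupp p) h x).+1); apply: outside; lia.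
elim: i => [|i IHi]; first by rewrite addn0.
by rewrite addnS => /down; exact: IHi.
Qed.

End LinearExtension.

Section BilinearExtension.
Variables K K' : choiceType.

Lemma bilin_is_bilinear (f : K -> K -> QA K') : bilinear (bilin f).
Proof.
split=> [q | p]; first exact: lin_is_linear.
move=> c q1 q2; rewrite /bilin -lin_funP; apply: eq_lin => x; exact: linearP.
Qed.
HB.instance Definition _ (f : K -> K -> QA K') :=
  bilinear_isBilinear.Build rat (QA K) (QA K) (QA K') *:%R *:%R (bilin f)
    (bilin_is_bilinear f).

Lemma bilinU (f : K -> K -> QA K') x y : bilin f << x >> << y >> = f x y.
Proof. by rewrite /bilin !linU. Qed.

Lemma linear_bilinl (K1 K2 K3 : choiceType)
    (F : {bilinear QA K1 -> QA K2 -> QA K3}) z : linear (F ^~ z).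
Proof. exact: linearPl. Qed.

Lemma linear_bilinr (K1 K2 K3 : choiceType)
    (F : {bilinear QA K1 -> QA K2 -> QA K3}) z : linear (F z).
Proof. exact: linearPr. Qed.

Lemma bilinear_malg_ext (K1 K2 : choiceType) (F G : QA K1 -> QA K2 -> QA K) :
  bilinear F -> bilinear G ->
  (forall x y, F << x >> << y >> = G << x >> << y >>) -> forall p q, F p q = G p q.
Proof.
move=> [linFl linFr] [linGl linGr] eFG p q.
apply: (linear_malg_ext (linFl q) (linGl q)) => x.
exact: (linear_malg_ext (linFr _) (linGr _)).
Qed.

End BilinearExtension.

Lemma inj_morph_comm (K K' : choiceType) (F : QA K -> QA K') m m' :
  injective F -> {morph F : p q / m p q >-> m' p q} -> commutative m' ->
  commutative m.
Proof. by move=> injF Fm m'C p q; apply: injF; rewrite !Fm m'C. Qed.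

Lemma inj_morph_assoc (K K' : choiceType) (F : QA K -> QA K') m m' :
  injective F -> {morph F : p q / m p q >-> m' p q} -> associative m' ->
  associative m.
Proof. by move=> injF Fm m'A p q r; apply: injF; rewrite !Fm m'A. Qed.

Lemma bilin_morph (K1 K2 : choiceType) (F : {linear QA K1 -> QA K2})
    (g : K1 -> QA K2) (f : K1 -> K1 -> QA K1) (m : {bilinear QA K2 -> QA K2 -> QA K2}) :
  (forall x, F << x >> = g x) -> (forall x y, F (f x y) = m (g x) (g y)) ->
  {morph F : p q / bilin f p q >-> m p q}.
Proof.
move=> FU Ff; apply: bilinear_malg_ext => [| |x y]; last by rewrite bilinU Ff !FU.
- by split=> [q | p] c u v /=; rewrite ?linearPl ?linearPr linearP.
- by split=> [q | p] c u v /=; rewrite linearP ?linearPl ?linearPr.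
Qed.

Lemma scale_add3 (V : lmodType rat) (c : rat) (a1 b1 a2 b2 a3 b3 : V) :
  (c *: a1 + b1) + (c *: a2 + b2) + (c *: a3 + b3) =
  c *: (a1 + a2 + a3) + (b1 + b2 + b3).
Proof. by rewrite !scalerDr [LHS](AC (2*2*2) (1*3*5*(2*4*6))). Qed.

Ltac bilinear_by_expansion :=
  by split=> ? ? ? ? /=; rewrite ?(linearPl, linearPr); try rewrite scale_add3.

Section Stuffle.
Variables (L : choiceType) (br : L -> L -> seq (rat * L)).
Implicit Types (P Q : QA L) (X Y Z M R : QA (seq L)) (a b : L) (u v w : seq L).

Definition bracket a b : QA L := \sum_(c <- br a b) c.1 *: << c.2 >>.

(* [catl] and [st] are locked: when a rewrite fails to match them, unfolding
   them into sums over supports makes unification take minutes. *)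
Fact catl_key : unit. Proof. by []. Qed.
Definition catl : QA L -> QA (seq L) -> QA (seq L) :=
  locked_with catl_key (fun P X => lin (fun a => pre a X) P).

HB.instance Definition _ a :=
  GRing.Linear.copy (pre a) (lin (fun w => << a :: w >>)).

Lemma catl_is_bilinear : bilinear catl.
Proof.
rewrite /catl unlock; split=> [X | P]; first exact: lin_is_linear.
by move=> c X1 X2; rewrite -lin_funP; apply: eq_lin => a; rewrite linearP.
Qed.
HB.instance Definition _ :=
  bilinear_isBilinear.Build rat (QA L) (QA (seq L)) (QA (seq L)) *:%R *:%R catl
    catl_is_bilinear.

Fact stuffle_key : unit. Proof. by []. Qed.
Definition st : QA (seq L) -> QA (seq L) -> QA (seq L) :=
  locked_with stuffle_key (stuffle br).

Lemma stE : st = stuffle br. Proof. by rewrite /st unlock. Qed.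

Lemma st_is_bilinear : bilinear st.
Proof. rewrite stE; exact: bilin_is_bilinear. Qed.
HB.instance Definition _ :=
  bilinear_isBilinear.Build rat (QA (seq L)) (QA (seq L)) (QA (seq L)) *:%R *:%R st
    st_is_bilinear.

Local Notation "[ P , Q ]" := (bilin bracket P Q).

Lemma preU a w : pre a << w >> = << a :: w >>.
Proof. exact: linU. Qed.

Lemma catlU a X : catl << a >> X = pre a X.
Proof. by rewrite /catl unlock linU. Qed.

Lemma stU u v : st << u >> << v >> = stw br u v.
Proof. rewrite stE; exact: bilinU. Qed.

Lemma stw_nilr u : stw br u [::] = << u >>.
Proof. by case: u. Qed.

Lemma catl_bracket a b X :
  catl (bracket a b) X = \sum_(c <- br a b) c.1 *: pre c.2 X.
Proof.
rewrite linear_sumlz; apply: eq_bigr => c _.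
by rewrite linearZl /= catlU.
Qed.

Lemma stw_cons a u b v : stw br (a :: u) (b :: v) =
  pre a (stw br u (b :: v)) + pre b (stw br (a :: u) v)
  + catl (bracket a b) (stw br u v).
Proof. by rewrite catl_bracket. Qed.

Lemma st1l X : st << [::] >> X = X.
Proof.
apply: (linear_malg_ext (linear_bilinr _ _) (fun c p q => erefl)) => v /=.
by rewrite stU.
Qed.

Lemma st1r X : st X << [::] >> = X.
Proof.
apply: (linear_malg_ext (linear_bilinl _ _) (fun c p q => erefl)) => u /=.
by rewrite stU stw_nilr.
Qed.

Lemma st_catl P Q X Y :
  st (catl P X) (catl Q Y) =
  catl P (st X (catl Q Y)) + catl Q (st (catl P X) Y) + catl [P, Q] (st X Y).
Proof.
move: P Q; apply: bilinear_malg_ext => [||a b]; [bilinear_by_expansion.. |].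
move: X Y; apply: bilinear_malg_ext => [||u v]; [bilinear_by_expansion.. |].
by rewrite !catlU !preU !stU bilinU stw_cons.
Qed.

Lemma st_sum3_catl P1 P2 P3 M1 M2 M3 M Q Z R :
  M = catl P1 M1 + catl P2 M2 + catl P3 M3 -> R = catl Q Z ->
  st M R = catl P1 (st M1 R) + catl P2 (st M2 R) + catl P3 (st M3 R)
    + catl Q (st M Z) + catl [P1, Q] (st M1 Z) + catl [P2, Q] (st M2 Z)
    + catl [P3, Q] (st M3 Z).
Proof.
move=> eM eR; rewrite {1}eM !linearDl /= eR.
rewrite (st_catl P1) (st_catl P2) (st_catl P3) -eR eM.
rewrite !linearDl !linearDr /=.
by rewrite [LHS](AC (3*3*3) (1*4*7*(2*5*8)*3*6*9)).
Qed.

Lemma st_catl_sum3 P1 P2 P3 M1 M2 M3 M Q Z R :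
  M = catl P1 M1 + catl P2 M2 + catl P3 M3 -> R = catl Q Z ->
  st R M = catl Q (st Z M) + catl P1 (st R M1) + catl P2 (st R M2)
    + catl P3 (st R M3) + catl [Q, P1] (st Z M1) + catl [Q, P2] (st Z M2)
    + catl [Q, P3] (st Z M3).
Proof.
move=> eM eR; rewrite {1}eM !linearDr /= eR.
rewrite (st_catl Q P1) (st_catl Q P2) (st_catl Q P3) -eR eM.
rewrite !linearDr /=.
by rewrite [LHS](AC (3*3*3) ((1*4*7)*2*5*8*3*6*9)).
Qed.

Section Commutativity.
Hypothesis bracketC : forall a b, bracket a b = bracket b a.

Lemma stwC u v : stw br u v = stw br v u.
Proof.
elim: u v => [|a u IHu] v; first by rewrite stw_nilr.
elim: v => [|b v IHv]; first by rewrite stw_nilr.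
by rewrite !stw_cons IHu IHv IHu bracketC [pre a _ + _]addrC.
Qed.

Lemma stC : commutative st.
Proof.
apply: bilinear_malg_ext => [||u v]; [exact: st_is_bilinear | | by rewrite !stU stwC].
by split=> z; [exact: linear_bilinr | exact: linear_bilinl].
Qed.

End Commutativity.

Section Associativity.
Hypothesis bracketA : forall a b d, [bracket a b, << d >>] = [<< a >>, bracket b d].

Lemma st_wordsA u v w :
  st << u >> (st << v >> << w >>) = st (st << u >> << v >>) << w >>.
Proof.
elim: u v w => [|a u IHu] v w; first by rewrite !st1l.
elim: v w => [|b v IHv] w; first by rewrite st1r st1l.
elim: w => [|c w IHw]; first by rewrite !st1r.
have consE x t : << x :: t >> = catl << x >> << t >> by rewrite catlU preU.
have consC x t y s : st << x :: t >> << y :: s >> =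
    catl << x >> (st << t >> << y :: s >>) + catl << y >> (st << x :: t >> << s >>)
    + catl [<< x >>, << y >>] (st << t >> << s >>).
  by rewrite {1}consE {1}(consE y) st_catl -!consE.
rewrite (st_sum3_catl (consC a u b v) (consE c w)).
rewrite (st_catl_sum3 (consC b v c w) (consE a u)).
rewrite !IHu !IHv IHw !bilinU bracketA.
by rewrite [RHS](AC 7 (1*2*4*6*3*5*7)).
Qed.

Lemma stA : associative st.
Proof.
move=> + + r; apply: bilinear_malg_ext => [||u v]; [bilinear_by_expansion.. |].
move: r; apply: linear_malg_ext => [c x y|c x y|w] /=; rewrite ?linearPr //.
by rewrite st_wordsA.
Qed.

End Associativity.

End Stuffle.

Lemma stuffle_comm (L : choiceType) (br : L -> L -> seq (rat * L)) :
  (forall a b, bracket br a b = bracket br b a) -> commutative (stuffle br).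
Proof. by move=> /stC; rewrite stE. Qed.

Lemma stuffle_assoc (L : choiceType) (br : L -> L -> seq (rat * L)) :
  (forall a b d, bilin (bracket br) (bracket br a b) << d >> =
                 bilin (bracket br) << a >> (bracket br b d)) ->
  associative (stuffle br).
Proof. by move=> /stA; rewrite stE. Qed.

Section AdditiveBracket.
Variable M : nmodType.

Let br_add (k l : M) : seq (rat * M) := [:: (1, k + l)].

Lemma bracket_add k l : bracket br_add k l = << k + l >>.
Proof. by rewrite /bracket big_seq1 scale1r. Qed.

Lemma stuffle_add_comm : commutative (stuffle br_add).
Proof. by apply: stuffle_comm => k l; rewrite !bracket_add addrC. Qed.

Lemma stuffle_add_assoc : associative (stuffle br_add).
Proof.
by apply: stuffle_assoc => k l m; rewrite !bracket_add !bilinU !bracket_add addrA.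
Qed.

End AdditiveBracket.

Lemma bracketN k l : bracket brN k l = << (k + l)%N >>.
Proof. exact: (@bracket_add nat). Qed.

Lemma stuffleII_comm : commutative stuffleII.
Proof. exact: stuffle_add_comm. Qed.

Lemma stuffleII_assoc : associative stuffleII.
Proof. exact: stuffle_add_assoc. Qed.

Lemma stuffleC_comm : commutative stuffleC.
Proof. exact: stuffleII_comm. Qed.

Lemma stuffleB_comm : commutative stuffleB.
Proof. exact: stuffle_add_comm. Qed.

Lemma stuffleB_assoc : associative stuffleB.
Proof. exact: stuffle_add_assoc. Qed.

Lemma bracketIE :
  (forall k l, bracket brI (zS k) (zS l) = << zS (k + l).+1 >> + << zS (k + l) >>)
  * (forall k, bracket brI thetaI (zS k) = << zS k.+1 >>)
  * (forall k, bracket brI (zS k) thetaI = << zS k.+1 >>)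
  * (bracket brI thetaI thetaI = << zS 1 >> - << thetaI >>).
Proof.
by rewrite /bracket; do !split=> *; rewrite !big_cons big_nil !scale1r ?scaleN1r addr0.
Qed.

Lemma stuffleI_comm : commutative stuffleI.
Proof.
apply: stuffle_comm => [[|k] [|l]]; rewrite !bracketIE //.
by rewrite addnC.
Qed.

Lemma stuffleI_assoc : associative stuffleI.
Proof.
apply: stuffle_assoc => [[|k] [|l] [|m]];
  rewrite !bracketIE ?(linearBl, linearBr, linearDl, linearDr) /= !bilinU !bracketIE;
  by rewrite ?addSn ?addnS ?add0n ?addnA ?addn0 ?addrK.
Qed.

HB.instance Definition _ k :=
  GRing.Linear.copy (preIII k) (lin (fun w => << (k, w) >>)).

Definition sigma_minus_letter (k : int) : QA int := << k >> - << k - 1 >>.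

Fact sigmaIII_key : unit. Proof. by []. Qed.
Definition sigmaIII : AIII -> AB := locked_with sigmaIII_key (lin sigma_minus).

Lemma sigmaIII_is_linear : linear sigmaIII.
Proof. rewrite /sigmaIII unlock; exact: lin_is_linear. Qed.
HB.instance Definition _ :=
  GRing.isLinear.Build rat AIII AB *:%R sigmaIII sigmaIII_is_linear.

Lemma sigmaIIIU x : sigmaIII << x >> = sigma_minus x.
Proof. by rewrite /sigmaIII unlock linU. Qed.

Lemma sigma_minusE k u : sigma_minus (k, u) = catl (sigma_minus_letter k) << u >>.
Proof. by rewrite linearBl /= !catlU !preU. Qed.

Lemma sigmaIII_preIII k M : sigmaIII (preIII k M) = catl (sigma_minus_letter k) M.
Proof.
move: M; apply: linear_malg_ext => [c p q|c p q|w] /=; rewrite ?linearP ?linearPr //.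
by rewrite [preIII _ _]linU sigmaIIIU sigma_minusE.
Qed.

Lemma catl_bracket_sigma_minus k l M :
  catl (bilin (bracket brB) (sigma_minus_letter k) (sigma_minus_letter l)) M =
  catl (sigma_minus_letter (k + l)) M - catl (sigma_minus_letter (k + l - 1)) M.
Proof.
rewrite -linearBl; congr (catl _ M).
rewrite linearBl linearBr linearBr /= !bilinU !(@bracket_add int).
by rewrite [k + (l - 1)]addrA [k - 1 + l]addrAC [k - 1 + (l - 1)]addrA [k - 1 + l]addrAC.
Qed.

Lemma sigmaIII_stIII x y :
  sigmaIII (stIII_basis x y) = st brB (sigma_minus x) (sigma_minus y).
Proof.
case: x y => k u [l v]; rewrite /stIII_basis /stuffleB -stE.
rewrite !linearD linearN /= (sigma_minusE k) (sigma_minusE l).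
rewrite st_catl catl_bracket_sigma_minus.
by do 2?apply: (congr2 +%R); rewrite sigmaIII_preIII.
Qed.

Lemma sigmaIII_morph : {morph sigmaIII : p q / stuffleIII p q >-> stuffleB p q}.
Proof. rewrite /stuffleB -stE; exact: bilin_morph sigmaIIIU sigmaIII_stIII. Qed.

Lemma mcoeff_sigmaIII p k w : (sigmaIII p)@_(k :: w) = p@_(k, w) - p@_(k + 1, w).
Proof.
rewrite /sigmaIII unlock mcoeff_lin -!sum_mcoeff_delta -sumrB.
apply: eq_bigr => -[l u] _; rewrite -mulrBr mcoeffB !mcoeffU !eqseq_cons.
by rewrite !xpair_eqE /= subr_eq.
Qed.

Lemma sigmaIII_inj : injective sigmaIII.
Proof.
apply: raddf_inj => p p0; apply/malgP => -[k w]; rewrite mcoeff0.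
pose g n : int * seq int := (k + n%:Z, w).
have gK : cancel g (fun x => `|x.1 - k|%N) by move=> n; rewrite /g /= addrAC subrr add0r.
have step n : p@_(g n.+1) = 0 -> p@_(g n) = 0.
  move: (mcoeff_sigmaIII p (k + n%:Z) w); rewrite p0 mcoeff0 => /esym/subr0_eq ->.
  by have -> : k + n%:Z + 1 = k + n.+1%:Z by lia.
by have := mcoeff_chain_eq0 gK step 0; rewrite /g addr0.
Qed.

Lemma stuffleIII_comm : commutative stuffleIII.
Proof. exact: inj_morph_comm sigmaIII_inj sigmaIII_morph stuffleB_comm. Qed.

Lemma stuffleIII_assoc : associative stuffleIII.
Proof. exact: inj_morph_assoc sigmaIII_inj sigmaIII_morph stuffleB_assoc. Qed.

HB.instance Definition _ a :=
  GRing.Linear.copy (preIV a) (lin (fun w => << Some (a, w) >>)).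

Definition sigma_plus_letter (a : letI) : QA nat :=
  match a with thetaI => << 1%N >> | zS n => << n.+1 >> + << n >> end.

Definition sigma_plus_ext (x : option (letI * seq nat)) : QA (seq nat) :=
  match x with
  | None => << [::] >>
  | Some (thetaI, w) => << 1%N :: w >>
  | Some (zS n, w) => sigma_plus n w
  end.

Fact sigmaIV_key : unit. Proof. by []. Qed.
Definition sigmaIV : AIV -> QA (seq nat) := locked_with sigmaIV_key (lin sigma_plus_ext).

Lemma sigmaIV_is_linear : linear sigmaIV.
Proof. rewrite /sigmaIV unlock; exact: lin_is_linear. Qed.
HB.instance Definition _ :=
  GRing.isLinear.Build rat AIV (QA (seq nat)) *:%R sigmaIV sigmaIV_is_linear.

Lemma sigmaIVU x : sigmaIV << x >> = sigma_plus_ext x.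
Proof. by rewrite /sigmaIV unlock linU. Qed.

Lemma sigma_plus_extE a w :
  sigma_plus_ext (Some (a, w)) = catl (sigma_plus_letter a) << w >>.
Proof. by case: a => [|n] /=; rewrite ?linearDl /= !catlU !preU. Qed.

Lemma sigmaIV_preIV a M : sigmaIV (preIV a M) = catl (sigma_plus_letter a) M.
Proof.
move: M; apply: linear_malg_ext => [c p q|c p q|w] /=; rewrite ?linearP ?linearPr //.
by rewrite [preIV _ _]linU sigmaIVU sigma_plus_extE.
Qed.

Lemma sigma_plus_letter_bracket a b :
  lin sigma_plus_letter (bracket brI a b) =
  bilin (bracket brN) (sigma_plus_letter a) (sigma_plus_letter b).
Proof.
case: a b => [|k] [|l]; rewrite !bracketIE ?linearB ?linearD /= !linU;
  rewrite ?(linearDl, linearDr) /= !bilinU;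
  by rewrite !bracketN ?addrK ?addnS ?addSn ?add0n ?addn0.
Qed.

Lemma sigmaIV_lin_preIV P M :
  sigmaIV (lin (preIV ^~ M) P) = catl (lin sigma_plus_letter P) M.
Proof.
move: P; apply: linear_malg_ext => [c p q|c p q|a] /=; rewrite ?linearP ?linearPl //.
by rewrite !linU sigmaIV_preIV.
Qed.

(* The mixed theta/z cases of [stIV_basis] are written with swapped factors,
   whence the use of the commutativity of stuffleC. *)
Lemma stIV_basisE a u b v :
  stIV_basis (Some (a, u)) (Some (b, v)) =
  preIV a (stuffleC << u >> (sigma_plus_ext (Some (b, v))))
  + preIV b (stuffleC (sigma_plus_ext (Some (a, u))) << v >>)
  + lin (preIV ^~ (stuffleC << u >> << v >>)) (bracket brI a b).
Proof.
case: a b => [|k] [|l]; cbn [stIV_basis];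
  rewrite !bracketIE ?linearB ?linearD /= !linU; [by [] | | by [] | by []].
rewrite (stuffleC_comm << v >> << 1%N :: u >>) (stuffleC_comm _ << u >>).
by rewrite (stuffleC_comm << v >> << u >>) [X in X + _ = _]addrC.
Qed.

Lemma sigmaIV_stIV x y :
  sigmaIV (stIV_basis x y) = st brN (sigma_plus_ext x) (sigma_plus_ext y).
Proof.
case: x => [[a u]|]; last by rewrite st1l sigmaIVU.
case: y => [[b v]|]; last by case: a => *; rewrite st1r sigmaIVU.
rewrite stIV_basisE !sigma_plus_extE !linearD /= /stuffleC -stE.
rewrite st_catl -sigma_plus_letter_bracket.
by do 2?apply: (congr2 +%R); rewrite ?sigmaIV_preIV ?sigmaIV_lin_preIV.
Qed.

Lemma sigmaIV_morph : {morph sigmaIV : p q / stuffleIV p q >-> stuffleC p q}.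
Proof. rewrite /stuffleC -stE; exact: bilin_morph sigmaIVU sigmaIV_stIV. Qed.

Lemma mcoeff_sigma_plus_ext x m w :
  (sigma_plus_ext x)@_(m :: w) =
  (m == 1)%N%:R * (x == Some (thetaI, w))%:R + (x == Some (zS m, w))%:R
  + (0 < m)%N%:R * (x == Some (zS m.-1, w))%:R.
Proof.
case: x => [[[|n] u]|] /=; rewrite ?mcoeffD !mcoeffU ?mulr0 ?addr0 ?add0r -?natrM //.
  by rewrite eqseq_cons eq_sym mulnb.
by case: m => [|m]; rewrite !eqseq_cons ?mul0n ?mul1n ?addr0 ?eqSS /= ?add0r // addrC.
Qed.

Lemma mcoeff_sigmaIV p m w :
  (sigmaIV p)@_(m :: w) =
  (m == 1)%N%:R * p@_(Some (thetaI, w)) + p@_(Some (zS m, w))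
  + (0 < m)%N%:R * p@_(Some (zS m.-1, w)).
Proof.
rewrite /sigmaIV unlock mcoeff_lin.
under eq_bigr => x _ do
  rewrite mcoeff_sigma_plus_ext !mulrDr mulrCA [p@_x * (_ * _)]mulrCA.
by rewrite !big_split /= -!mulr_sumr !sum_mcoeff_delta.
Qed.

Lemma mcoeff_sigmaIV_nil p : (sigmaIV p)@_[::] = p@_None.
Proof.
rewrite /sigmaIV unlock mcoeff_lin -sum_mcoeff_delta; apply: eq_bigr => x _.
by case: x => [[[|n] u]|]; rewrite /= ?mcoeffD !mcoeffU.
Qed.

Lemma sigmaIV_inj : injective sigmaIV.
Proof.
apply: raddf_inj => p p0.
have coef0 m w : (m == 1)%N%:R * p@_(Some (thetaI, w)) + p@_(Some (zS m, w))
    + (0 < m)%N%:R * p@_(Some (zS m.-1, w)) = 0.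
  by rewrite -mcoeff_sigmaIV p0 mcoeff0.
have z0 w : p@_(Some (zS 0, w)) = 0.
  by have := coef0 0%N w; rewrite !mul0r add0r addr0.
have zS_eq0 w n : p@_(Some (zS n.+1, w)) = 0.
  pose g k : option (letI * seq nat) := Some (zS k.+1, w).
  have gK : cancel g (fun x => if x is Some (zS k, _) then k.-1 else 0%N) by [].
  apply: (mcoeff_chain_eq0 gK) => k gk0.
  by have := coef0 k.+2 w; rewrite mul0r add0r mul1r gk0 add0r.
have t0 w : p@_(Some (thetaI, w)) = 0.
  by have := coef0 1%N w; rewrite mul1r zS_eq0 z0 mulr0 !addr0.
apply/malgP => -[[[|[|n]] w]|]; rewrite mcoeff0 //.
by rewrite -mcoeff_sigmaIV_nil p0 mcoeff0.
Qed.

Lemma stuffleIV_comm : commutative stuffleIV.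
Proof. exact: inj_morph_comm sigmaIV_inj sigmaIV_morph stuffleC_comm. Qed.

Lemma stuffleIV_assoc : associative stuffleIV.
Proof. exact: inj_morph_assoc sigmaIV_inj sigmaIV_morph stuffleII_assoc. Qed.

Theorem proposition4p6 :
  (commutative stuffleI /\ associative stuffleI) /\
  (commutative stuffleII /\ associative stuffleII) /\
  (commutative stuffleIII /\ associative stuffleIII) /\
  (commutative stuffleIV /\ associative stuffleIV).
Proof.
split; first by split; [exact: stuffleI_comm | exact: stuffleI_assoc].
split; first by split; [exact: stuffleII_comm | exact: stuffleII_assoc].
split; first by split; [exact: stuffleIII_comm | exact: stuffleIII_assoc].
by split; [exact: stuffleIV_comm | exact: stuffleIV_assoc].
Qed.
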